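(* For all positive integers $k$ and $\ell$ there exists a positive integer $n$ such that (a) $s(nk)=\ell k$, and (b) $n\le \dfrac{2^{\ell k+n_k}-2^{\mu_2(k)}}{k}$.
   Context: $s(m)$ denotes the sum of the binary digits of the positive integer $m$. For a positive integer $k$, $n_k=\lceil \log_2 k\rceil$ (the smallest nonnegative integer $n$ with $k\le 2^n$), and $\mu_2(k)$ is the exponent of $2$ in $k$, i.e. the largest $\alpha\ge 0$ with $2^\alpha\mid k$. *)

From mathcomp Require Import all_boot.

Fixpoint bsum_aux (fuel m : nat) : nat :=
  match fuel with
  | 0 => 0
  | f.+1 => if m is 0 then 0 else odd m + bsum_aux f m./2
  end.
Definition s (m : nat) : nat := bsum_aux m m.

Definition nk (k : nat) : nat := up_log 2 k.

Definition mu2 (k : nat) : nat := logn 2 k.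

From mathcomp Require Import all_boot zify.
From mathcomp Require Import cyclic.

(* Write k = 2^mu * q with q odd, so that mu = mu2 k and n_k = mu + c where
   c = ceil(log2 q).  It suffices to find a multiple m of q with binary digit
   sum l*k and m < 2^(l*k + c): then n = m / q satisfies n*k = m * 2^mu,
   which has the same digit sum, and n*k + 2^mu = (m + 1) * 2^mu is at most
   2^(l*k + c + mu).
   Such an m is obtained as a complement m = 2^N - 1 - d with N = l*k + c:
   its digit sum is N - s(d), so we need d < 2^N with s(d) = c and
   d = 2^N - 1 (mod q).  Choosing e with 2^e = 1 (mod q) and c <= e < q
   (e.g. e = totient q), such a d is the concatenation of the c-bit word
   2^c - 1 - r and the word 2r shifted by e bits, where r is a suitable
   residue modulo q: the low block has digit sum c - s(r) and the high one
   s(r), and modulo q the shift by e bits is invisible, so d = 2^c - 1 + r. *)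

Lemma bsum_aux_fuel f g m : m <= f -> m <= g -> bsum_aux f m = bsum_aux g m.
Proof.
elim: f g m => [|f IH] [|g] [|m] //= hf hg.
by congr (_ + _); apply: IH; lia.
Qed.

Lemma sE m : s m = if m is 0 then 0 else odd m + s m./2.
Proof. by rewrite /s; case: m => //= m; congr (_ + _); apply: bsum_aux_fuel; lia. Qed.

Lemma s_bit (b : bool) x : s (b + x.*2) = b + s x.
Proof.
rewrite [LHS]sE; case e: (b + x.*2) => [|y].
  by case: b e => //; case: x.
by rewrite -e oddD oddb odd_double addbF half_bit_double.
Qed.

Lemma s_mul_pow2 x mu : s (x * 2 ^ mu) = s x.
Proof.
elim: mu => [|mu IH]; first by rewrite muln1.
by rewrite expnS mulnCA mul2n -[_.*2]add0n (s_bit false) IH.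
Qed.

Lemma s_concat j x y : x < 2 ^ j -> s (x + 2 ^ j * y) = s x + s y.
Proof.
elim: j x => [|j IH] x hx.
  by move: hx; rewrite expn0 ltnS leqn0 mul1n => /eqP ->.
have hx2 : x./2 < 2 ^ j by move: hx; rewrite expnS; lia.
have -> : x + 2 ^ j.+1 * y = odd x + (x./2 + 2 ^ j * y).*2.
  by rewrite -[x in LHS]odd_double_half expnS; lia.
by rewrite s_bit IH // addnA -s_bit odd_double_half.
Qed.

Lemma s_compl j x : x < 2 ^ j -> s x + s (2 ^ j - 1 - x) = j.
Proof.
elim: j x => [|j IH] x hx.
  by move: hx; rewrite expn0 ltnS leqn0 => /eqP ->.
have hx2 : x./2 < 2 ^ j by move: hx; rewrite expnS; lia.
have -> : 2 ^ j.+1 - 1 - x = ~~ odd x + (2 ^ j - 1 - x./2).*2.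
  by move: hx2; rewrite -[x in LHS]odd_double_half expnS; case: (odd x) => /=; lia.
rewrite -[x in s x]odd_double_half !s_bit; have := IH _ hx2.
by case: (odd x) => /=; lia.
Qed.

Lemma up_log_mul_pow2 mu q : 0 < q -> up_log 2 (q * 2 ^ mu) = mu + up_log 2 q.
Proof.
move=> hq; elim: mu => [|mu IH]; first by rewrite muln1.
by rewrite expnS mulnCA up_logMp // ?IH // muln_gt0 hq expn_gt0.
Qed.

(* 0 is not coprime to q > 1, hence fewer than q residues are units. *)
Lemma totient_lt q : 1 < q -> totient q < q.
Proof.
move=> hq; rewrite totient_count_coprime big_ltn ?(ltnW hq) //.
have -> : coprime q 0 = false by rewrite /coprime gcdn0; case: q hq => [|[|]].
rewrite add0n (@leq_ltn_trans (\sum_(1 <= i < q) 1)) //.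
  by apply: leq_sum => i _; case: (coprime q i).
by rewrite sum_nat_const_nat muln1; lia.
Qed.

Lemma pow2_unit_exponent q : 0 < q -> coprime 2 q ->
  exists e, [/\ 2 ^ e = 1 %[mod q], q <= 2 ^ e & e < q].
Proof.
move=> hq0 cq; case: (ltngtP q 1) => [|hq1|->]; [lia | | by exists 0; rewrite !modn1].
have he := Euler_exp_totient cq; exists (totient q); split=> //; last exact: totient_lt.
have h2 : 1 < 2 ^ totient q by rewrite -{1}(expn0 2) ltn_exp2l // totient_gt0.
by rewrite leqNgt; apply/negP => hlt; move: he; rewrite !modn_small //; lia.
Qed.

Lemma residue_with_digit_sum q e c t : 0 < q -> 2 ^ e = 1 %[mod q] ->
  q <= 2 ^ c -> c <= e ->
  exists d, [/\ d < 2 ^ (e + c.+1), s d = c & d = 2 ^ c - 1 + t %[mod q]].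
Proof.
move=> hq he hqc hce; set r := t %% q.
have hr : r < 2 ^ c by apply: leq_trans hqc; rewrite ltn_mod.
have hce2 : 2 ^ c <= 2 ^ e by rewrite leq_pexp2l.
exists ((2 ^ c - 1 - r) + 2 ^ e * r.*2); split.
- rewrite expnD expnS (@leq_trans (2 ^ e * (r.*2).+1)) //; first by lia.
  by rewrite leq_pmul2l ?expn_gt0 //; lia.
- by rewrite s_concat; [rewrite -[_.*2]add0n (s_bit false) addnC s_compl | lia].
- rewrite -modnDmr -modnMml he modnMml mul1n modnDmr.
  have -> : 2 ^ c - 1 - r + r.*2 = 2 ^ c - 1 + r by lia.
  by rewrite modnDmr.
Qed.

(* Every odd q <= j has a multiple m < 2^(j + ceil(log2 q)) whose
   binary digit sum is j: take the complement of the word d built above. *)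
Lemma multiple_with_digit_sum q j : 0 < q -> coprime 2 q -> q <= j ->
  exists m, [/\ q %| m, s m = j & m < 2 ^ (j + up_log 2 q)].
Proof.
move=> hq cq hqj; set c := up_log 2 q; set N := j + c.
have hqc : q <= 2 ^ c := up_logP q (isT : 1 < 2).
have [e [he hqe heq]] := pow2_unit_exponent _ hq cq.
have hce : c <= e := up_log_min (isT : 1 < 2) hqe.
have hcN : 2 ^ c <= 2 ^ N by rewrite leq_pexp2l // leq_addl.
have [d [hde hsd hdq]] := residue_with_digit_sum _ _ _ (2 ^ N - 2 ^ c) hq he hqc hce.
have hdN : d < 2 ^ N by apply: leq_trans hde _; rewrite leq_pexp2l //; lia.
have hdq' : d = 2 ^ N - 1 %[mod q].
  by rewrite hdq; congr (_ %% q); move: (expn_gt0 2 c) hcN; lia.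
exists (2 ^ N - 1 - d); split.
- by rewrite -eqn_mod_dvd ?hdq' // subn1 -ltnS prednK ?expn_gt0.
- by move: (s_compl _ _ hdN); rewrite hsd addnC => /addIn.
- by rewrite (leq_ltn_trans (leq_subr _ _)) // subn1 ltn_predL expn_gt0.
Qed.

Theorem mainTheorem2 (k l : nat) (hk : 0 < k) (hl : 0 < l) :
  exists n : nat, 0 < n /\ s (n * k) = l * k /\
    n * k + 2 ^ mu2 k <= 2 ^ (l * k + nk k).
Proof.
have [q cq hkq] := pfactor_coprime (isT : prime 2) hk.
rewrite /mu2 /nk; set mu := logn 2 k in hkq *.
have hq : 0 < q by move: hk; rewrite hkq muln_gt0 => /andP[].
have hqk : q <= l * k by rewrite hkq (leq_trans _ (leq_pmull _ hl)) // leq_pmulr ?expn_gt0.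
have [_ [/dvdnP[n ->] hsm hm]] := multiple_with_digit_sum _ _ hq cq hqk.
have hnk : n * k = n * q * 2 ^ mu by rewrite hkq mulnA.
exists n; rewrite hnk s_mul_pow2 hsm; split; [|split=> //].
- by case: n hsm {hm hnk} => // /esym/eqP; rewrite mul0n muln_eq0; lia.
- have -> : up_log 2 k = mu + up_log 2 q by rewrite hkq up_log_mul_pow2.
  by rewrite addnCA expnD mulnC -mulnSr leq_pmul2l ?expn_gt0.
Qed.
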